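(* For every positive integer $h$, there is a protocol solving MEQ-AD$(3,6^h)$ with communication complexity $h\log_2 27$; in particular $C_{AD}(3,6^h)\le h\log_2 27$.
   Context: There are $n$ nodes labeled $1,\dots,n$ (here $n=3$); node $i$ privately holds an input $x_i\in\{1,\dots,M\}$. Communication is over private point-to-point links of a fully connected synchronous network. A deterministic protocol $P$ is a fixed finite schedule of steps $l=1,\dots,L(P)$; in step $l$ a prescribed node $T_l$ sends to a prescribed node $R_l\neq T_l$ one symbol $f_l(x_{T_l},T_l^+(l))$, where $T_l^+(l)$ is the sequence of symbols $T_l$ has received in steps $1,\dots,l-1$; only $R_l$ receives it. Its complexity is $C(P)=\sum_{l}\log_2 S_l(P)$, with $S_l(P)$ the number of distinct values of the step-$l$ symbol over all inputs in $\{1,\dots,M\}^n$. At the end each node $i$ outputs a bit $EQ_i$ depending on $x_i$ and the symbols it received. $P$ solves MEQ-AD$(n,M)$ if for every input, $EQ_1=\cdots=EQ_n=0$ iff $x_1=\cdots=x_n$. $C_{AD}(n,M)$ is the infimum of $C(P)$ over protocols solving MEQ-AD$(n,M)$. *)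

From Stdlib Require Import Reals List Arith Lia.
Import ListNotations.
Open Scope R_scope.

(* Nodes are labelled 1..n; symbols are natural numbers. An input is a list
   xs = [x_1; ...; x_n]; node i holds nth (i-1) xs. *)
Definition inp (xs : list nat) (i : nat) : nat := nth (i - 1) xs 0%nat.

(* One step: transmitter T, receiver R, and the symbol function
   f (x_T) (symbols received so far by T, in order). *)
Record step := mkStep {
  stT : nat;
  stR : nat;
  stf : nat -> list nat -> nat
}.

(* A protocol: a finite schedule of steps plus, for each node i, an output
   map EQ_i = out i x_i (symbols received by i); bit 0 is [false]. *)
Record protocol := mkProtocol {
  steps : list step;
  out : nat -> nat -> list nat -> bool
}.

(* History: list of (receiver, symbol) for the steps executed so far. *)
Definition recv (i : nat) (hist : list (nat * nat)) : list nat :=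
  map snd (filter (fun p => Nat.eqb (fst p) i) hist).

Fixpoint run_from (ss : list step) (xs : list nat) (hist : list (nat * nat))
  : list (nat * nat) :=
  match ss with
  | [] => hist
  | s :: ss' =>
      let m := stf s (inp xs (stT s)) (recv (stT s) hist) in
      run_from ss' xs (hist ++ [(stR s, m)])
  end.

Definition run (P : protocol) (xs : list nat) : list (nat * nat) :=
  run_from (steps P) xs [].

(* The symbol sent at step l (0-based index). *)
Definition symbol (P : protocol) (xs : list nat) (l : nat) : nat :=
  snd (nth l (run P xs) (0%nat, 0%nat)).

Definition EQ (P : protocol) (xs : list nat) (i : nat) : bool :=
  out P i (inp xs i) (recv i (run P xs)).

Fixpoint all_inputs (n M : nat) : list (list nat) :=
  match n with
  | O => [[]]
  | S n' => flat_map (fun xs => map (fun v => v :: xs) (seq 1 M)) (all_inputs n' M)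
  end.

Definition valid_input (n M : nat) (xs : list nat) : Prop :=
  length xs = n /\ Forall (fun v => (1 <= v <= M)%nat) xs.

Definition S_l (n M : nat) (P : protocol) (l : nat) : nat :=
  length (nodup Nat.eq_dec (map (fun xs => symbol P xs l) (all_inputs n M))).

Definition log2R (r : R) : R := ln r / ln 2.

Definition complexity (n M : nat) (P : protocol) : R :=
  fold_right Rplus 0 (map (fun l => log2R (INR (S_l n M P l))) (seq 0 (length (steps P)))).

Definition well_formed (n : nat) (P : protocol) : Prop :=
  Forall (fun s => (1 <= stT s <= n)%nat /\ (1 <= stR s <= n)%nat /\ stT s <> stR s)
         (steps P).

Definition solves_MEQ_AD (n M : nat) (P : protocol) : Prop :=
  well_formed n P /\
  forall xs, valid_input n M xs ->
    ((forall i, (1 <= i <= n)%nat -> EQ P xs i = false) <->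
     (forall i j, (1 <= i <= n)%nat -> (1 <= j <= n)%nat -> inp xs i = inp xs j)).

(* C_AD(n,M) <= c, with C_AD the infimum (greatest lower bound) of the
   complexities of solving protocols. *)
Definition is_glb_R (E : R -> Prop) (r : R) : Prop :=
  (forall y, E y -> r <= y) /\ (forall b, (forall y, E y -> b <= y) -> b <= r).

Definition C_AD_le (n M : nat) (c : R) : Prop :=
  forall r, is_glb_R (fun y => exists P, solves_MEQ_AD n M P /\ y = complexity n M P) r ->
            r <= c.

(* Each input x in {1,...,6^h} is read as h base-6 digits of x - 1, and each
   digit as one of the six permutations s of {1,2,3}.  For every digit, node i
   sends s(i) -- a symbol out of three -- to the next node on the cycle
   1 -> 2 -> 3 -> 1, which compares it with the i-th letter of its own
   permutation.  If all three comparisons succeed, i.e. s_1(1) = s_2(1),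
   s_2(2) = s_3(2) and s_3(3) = s_1(3), then s_1 = s_2: otherwise they differ by
   the transposition (2 3), so s_3(2) = s_2(2) = s_1(3) = s_3(3).  Then s_2 and
   s_3 agree on 2 and 3, hence are equal.  The 3h steps each carry 3 symbols,
   for a total of 3h log2 3 = h log2 27 bits. *)
From Stdlib Require Import Reals List Arith Lia Lra.
Import ListNotations.
Local Open Scope nat_scope.

Definition digit (b d v : nat) : nat := (v / b ^ d) mod b.

Lemma digit_lt b d v : 0 < b -> digit b d v < b.
Proof. intros Hb. apply Nat.mod_upper_bound. lia. Qed.

Lemma digit_mul_pow b d a : a < b -> digit b d (a * b ^ d) = a.
Proof.
  intros Ha. unfold digit.
  rewrite Nat.div_mul by (apply Nat.pow_nonzero; lia).
  now apply Nat.mod_small.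
Qed.

Lemma digits_inj b h u v : 0 < b -> u < b ^ h -> v < b ^ h ->
  (forall d, d < h -> digit b d u = digit b d v) -> u = v.
Proof.
  intros Hb. revert u v. induction h as [|h IH]; intros u v Hu Hv Hd.
  - simpl in *. lia.
  - assert (Hlow : u mod b = v mod b).
    { specialize (Hd 0 ltac:(lia)). unfold digit in Hd.
      now rewrite Nat.pow_0_r, !Nat.div_1_r in Hd. }
    assert (Hhigh : u / b = v / b).
    { apply IH.
      - apply Nat.Div0.div_lt_upper_bound; simpl in Hu; lia.
      - apply Nat.Div0.div_lt_upper_bound; simpl in Hv; lia.
      - intros d Hdh. unfold digit. rewrite !Nat.Div0.div_div.
        apply (Hd (S d)). lia. }
    rewrite (Nat.div_mod u b), (Nat.div_mod v b) by lia. lia.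
Qed.

Definition perms3 : list (list nat) :=
  [[0; 1; 2]; [0; 2; 1]; [1; 0; 2]; [1; 2; 0]; [2; 0; 1]; [2; 1; 0]].

Definition code (i a : nat) : nat := nth (i - 1) (nth a perms3 []) 0.

Lemma code_lt i a : code i a < 3.
Proof.
  unfold code.
  destruct (nth_in_or_default (i - 1) (nth a perms3 []) 0) as [Hin | ->]; [|lia].
  assert (Hletters : Forall (Forall (fun c => c < 3)) perms3) by repeat constructor.
  destruct (nth_in_or_default a perms3 []) as [Hperm | Hnil].
  - rewrite Forall_forall in Hletters.
    exact (proj1 (Forall_forall _ _) (Hletters _ Hperm) _ Hin).
  - rewrite Hnil in Hin. contradiction.
Qed.

Lemma code_onto i c : 1 <= i <= 3 -> c < 3 -> exists a, a < 6 /\ code i a = c.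
Proof.
  intros Hi Hc.
  assert (i = 1 \/ i = 2 \/ i = 3) as [-> | [-> | ->]] by lia;
  assert (c = 0 \/ c = 1 \/ c = 2) as [-> | [-> | ->]] by lia;
  solve [ exists 0; split; [lia|reflexivity] | exists 1; split; [lia|reflexivity]
        | exists 2; split; [lia|reflexivity] | exists 3; split; [lia|reflexivity]
        | exists 4; split; [lia|reflexivity] ].
Qed.

Lemma code_cycle a b c : a < 6 -> b < 6 -> c < 6 ->
  code 1 a = code 1 b -> code 2 b = code 2 c -> code 3 c = code 3 a ->
  a = b /\ b = c.
Proof.
  intros Ha Hb Hc.
  destruct a as [|[|[|[|[|[|a]]]]]]; [..|lia];
  destruct b as [|[|[|[|[|[|b]]]]]]; [..|lia];
  destruct c as [|[|[|[|[|[|c]]]]]]; [..|lia];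
  cbv; intros; lia.
Qed.

Lemma length_nodup_map_onto {A : Type} (f : A -> nat) (L : list A) (c : nat) :
  (forall x, f x < c) -> (forall k, k < c -> exists x, In x L /\ f x = k) ->
  length (nodup Nat.eq_dec (map f L)) = c.
Proof.
  intros Hlt Honto.
  assert (Hsub : incl (nodup Nat.eq_dec (map f L)) (seq 0 c)).
  { intros k Hk. apply nodup_In, in_map_iff in Hk as [x [<- _]].
    apply in_seq. specialize (Hlt x). lia. }
  assert (Hsup : incl (seq 0 c) (nodup Nat.eq_dec (map f L))).
  { intros k Hk. apply in_seq in Hk. destruct (Honto k ltac:(lia)) as [x [Hx <-]].
    apply nodup_In, in_map_iff. eauto. }
  apply NoDup_incl_length in Hsub; [|apply NoDup_nodup].
  apply NoDup_incl_length in Hsup; [|apply seq_NoDup].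
  rewrite length_seq in *. lia.
Qed.

Lemma all_inputs_complete n M xs : valid_input n M xs -> In xs (all_inputs n M).
Proof.
  intros [<- Hrange]. induction Hrange as [|v xs Hv _ IH]; simpl; [auto|].
  apply in_flat_map. exists xs. split; [exact IH|].
  apply in_map_iff. exists v. split; [reflexivity|]. apply in_seq. lia.
Qed.

Definition oblivious (s : step) : Prop := forall v r, stf s v r = stf s v [].

Definition message (xs : list nat) (s : step) : nat * nat :=
  (stR s, stf s (inp xs (stT s)) []).

Lemma run_from_oblivious ss xs hist : Forall oblivious ss ->
  run_from ss xs hist = hist ++ map (message xs) ss.
Proof.
  intros Hobl. revert hist.
  induction Hobl as [|s ss Hs _ IH]; intros hist; simpl.
  - now rewrite app_nil_r.
  - rewrite IH, <- app_assoc, Hs. reflexivity.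
Qed.

Lemma symbol_oblivious P xs l s0 : Forall oblivious (steps P) ->
  l < length (steps P) -> symbol P xs l = snd (message xs (nth l (steps P) s0)).
Proof.
  intros Hobl Hl. unfold symbol, run. rewrite run_from_oblivious by exact Hobl.
  simpl. rewrite (nth_indep _ _ (message xs s0)) by now rewrite length_map.
  now rewrite map_nth.
Qed.

Lemma recv_app i hist1 hist2 : recv i (hist1 ++ hist2) = recv i hist1 ++ recv i hist2.
Proof. unfold recv. now rewrite filter_app, map_app. Qed.

Lemma fold_Rplus_const (r : R) s n :
  fold_right Rplus 0%R (map (fun _ : nat => r) (seq s n)) = (INR n * r)%R.
Proof.
  revert s. induction n as [|n IH]; intros s; cbn [seq map fold_right].
  - simpl. ring.
  - rewrite IH, S_INR. ring.
Qed.

Lemma complexity_uniform n M P c :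
  (forall l, l < length (steps P) -> S_l n M P l = c) ->
  complexity n M P = (INR (length (steps P)) * log2R (INR c))%R.
Proof.
  intros HS. unfold complexity.
  rewrite (map_ext_in _ (fun _ => log2R (INR c))).
  - apply fold_Rplus_const.
  - intros l Hl. apply in_seq in Hl. rewrite HS by lia. reflexivity.
Qed.

Lemma C_AD_le_solves n M P : solves_MEQ_AD n M P -> C_AD_le n M (complexity n M P).
Proof. intros HP r [Hlower _]. apply Hlower. eauto. Qed.

Section CyclicProtocol.

Variable h : nat.

Definition next_node (i : nat) : nat := match i with 1 => 2 | 2 => 3 | _ => 1 end.
Definition prev_node (i : nat) : nat := match i with 2 => 1 | 3 => 2 | _ => 3 end.

(* Inputs range over 1..6^h, so their digits are those of v - 1. *)
Definition digit_symbol (i v d : nat) : nat := code i (digit 6 d (v - 1)).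

Definition send_digit (i d : nat) : step := mkStep i (next_node i) (fun v _ => digit_symbol i v d).

Definition schedule : list step :=
  flat_map (fun i => map (send_digit i) (seq 0 h)) [1; 2; 3].

Definition verdict (i v : nat) (r : list nat) : bool :=
  if list_eq_dec Nat.eq_dec r (map (digit_symbol (prev_node i) v) (seq 0 h)) then false else true.

Definition cyclic_protocol : protocol := mkProtocol schedule verdict.

Lemma in_schedule s : In s schedule ->
  exists i d, 1 <= i <= 3 /\ d < h /\ s = send_digit i d.
Proof.
  intros Hs. apply in_flat_map in Hs as [i [Hi Hs]].
  apply in_map_iff in Hs as [d [<- Hd]]. apply in_seq in Hd.
  exists i, d. simpl in Hi. repeat split; lia.
Qed.

Lemma schedule_oblivious : Forall oblivious schedule.
Proof.
  apply Forall_forall. intros s Hs.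
  destruct (in_schedule s Hs) as [i [d [_ [_ ->]]]]. intros v r. reflexivity.
Qed.

Lemma length_schedule : length schedule = 3 * h.
Proof. unfold schedule. simpl. rewrite app_nil_r, !length_app, !length_map, !length_seq. lia. Qed.

Lemma cyclic_well_formed : well_formed 3 cyclic_protocol.
Proof.
  apply Forall_forall. intros s Hs.
  destruct (in_schedule s Hs) as [i [d [Hi [_ ->]]]]. simpl.
  assert (i = 1 \/ i = 2 \/ i = 3) as [-> | [-> | ->]] by lia; simpl; lia.
Qed.

Lemma recv_send_digits i j xs l :
  recv i (map (message xs) (map (send_digit j) l)) =
  if Nat.eqb (next_node j) i then map (digit_symbol j (inp xs j)) l else [].
Proof.
  unfold recv. induction l as [|d l IH]; simpl in *;
    destruct (Nat.eqb (next_node j) i); simpl; now rewrite ?IH.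
Qed.

Lemma recv_cyclic xs i : 1 <= i <= 3 ->
  recv i (run cyclic_protocol xs) =
  map (digit_symbol (prev_node i) (inp xs (prev_node i))) (seq 0 h).
Proof.
  intros Hi. unfold run. simpl steps.
  rewrite run_from_oblivious by exact schedule_oblivious.
  unfold schedule. simpl. rewrite !app_nil_r, !map_app, !recv_app, !recv_send_digits.
  assert (i = 1 \/ i = 2 \/ i = 3) as [-> | [-> | ->]] by lia; simpl;
    now rewrite ?app_nil_r.
Qed.

Lemma EQ_cyclic_false xs i : 1 <= i <= 3 ->
  EQ cyclic_protocol xs i = false <->
  forall d, d < h ->
    digit_symbol (prev_node i) (inp xs (prev_node i)) d = digit_symbol (prev_node i) (inp xs i) d.
Proof.
  intros Hi. unfold EQ. simpl out. rewrite recv_cyclic by exact Hi. unfold verdict.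
  destruct (list_eq_dec _ _ _) as [Heq | Hneq]; split; intros H; try discriminate.
  - intros d Hd. apply (proj1 map_ext_in_iff Heq). apply in_seq. lia.
  - reflexivity.
  - exfalso. apply Hneq, map_ext_in.
    intros d Hd. apply in_seq in Hd. apply H. lia.
Qed.

Lemma cyclic_sound x1 x2 x3 : valid_input 3 (6 ^ h) [x1; x2; x3] ->
  (forall i, 1 <= i <= 3 -> EQ cyclic_protocol [x1; x2; x3] i = false) ->
  x1 = x2 /\ x2 = x3.
Proof.
  intros [_ Hrange] Hacc.
  apply Forall_forall with (x := x1) in Hrange as Hx1; [|simpl; tauto].
  apply Forall_forall with (x := x2) in Hrange as Hx2; [|simpl; tauto].
  apply Forall_forall with (x := x3) in Hrange as Hx3; [|simpl; tauto].
  assert (Hdigits : forall d, d < h ->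
            digit 6 d (x1 - 1) = digit 6 d (x2 - 1) /\
            digit 6 d (x2 - 1) = digit 6 d (x3 - 1)).
  { intros d Hd.
    pose proof (proj1 (EQ_cyclic_false _ 1 ltac:(lia)) (Hacc 1 ltac:(lia)) d Hd).
    pose proof (proj1 (EQ_cyclic_false _ 2 ltac:(lia)) (Hacc 2 ltac:(lia)) d Hd).
    pose proof (proj1 (EQ_cyclic_false _ 3 ltac:(lia)) (Hacc 3 ltac:(lia)) d Hd).
    apply code_cycle; auto using digit_lt with arith. }
  assert (x1 - 1 = x2 - 1).
  { apply (digits_inj 6 h); try lia. intros d Hd. apply Hdigits, Hd. }
  assert (x2 - 1 = x3 - 1).
  { apply (digits_inj 6 h); try lia. intros d Hd. apply Hdigits, Hd. }
  lia.
Qed.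

Lemma cyclic_solves : solves_MEQ_AD 3 (6 ^ h) cyclic_protocol.
Proof.
  split; [exact cyclic_well_formed|].
  intros xs Hxs. destruct (Hxs) as [Hlen _].
  destruct xs as [|x1 [|x2 [|x3 [|? ?]]]]; try discriminate.
  split.
  - intros Hacc. destruct (cyclic_sound x1 x2 x3 Hxs Hacc) as [<- <-].
    intros i j Hi Hj.
    assert (i = 1 \/ i = 2 \/ i = 3) as [-> | [-> | ->]] by lia;
    assert (j = 1 \/ j = 2 \/ j = 3) as [-> | [-> | ->]] by lia; reflexivity.
  - intros Hall i Hi. apply EQ_cyclic_false; [exact Hi|].
    intros d _. rewrite (Hall (prev_node i) i); [reflexivity| |exact Hi].
    assert (i = 1 \/ i = 2 \/ i = 3) as [-> | [-> | ->]] by lia; simpl; lia.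
Qed.

(* Witnesses: constant inputs whose d-th digit encodes the wanted symbol. *)
Lemma S_l_cyclic l : l < 3 * h -> S_l 3 (6 ^ h) cyclic_protocol l = 3.
Proof.
  intros Hl.
  assert (Hlen : l < length (steps cyclic_protocol)) by (simpl; now rewrite length_schedule).
  destruct (in_schedule _ (nth_In schedule (send_digit 1 0) Hlen)) as [i [d [Hi [Hd Hnth]]]].
  assert (Hsymbol : forall xs, symbol cyclic_protocol xs l = digit_symbol i (inp xs i) d).
  { intros xs.
    rewrite (symbol_oblivious cyclic_protocol _ _ (send_digit 1 0) schedule_oblivious Hlen).
    simpl steps. now rewrite Hnth. }
  unfold S_l. apply length_nodup_map_onto.
  - intros xs. rewrite Hsymbol. apply code_lt.
  - intros c Hc. destruct (code_onto i c Hi Hc) as [a [Ha Hcode]].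
    set (v := 1 + a * 6 ^ d).
    assert (Hv : 1 <= v <= 6 ^ h).
    { assert (Hpow : 6 * 6 ^ d <= 6 ^ h)
        by (rewrite <- Nat.pow_succ_r'; apply Nat.pow_le_mono_r; lia).
      assert (0 < 6 ^ d) by (apply Nat.neq_0_lt_0, Nat.pow_nonzero; lia).
      unfold v. nia. }
    exists [v; v; v]. split.
    + apply all_inputs_complete. split; [reflexivity|].
      repeat (constructor; [exact Hv|]); constructor.
    + rewrite Hsymbol.
      replace (inp [v; v; v] i) with v
        by (assert (i = 1 \/ i = 2 \/ i = 3) as [-> | [-> | ->]] by lia; reflexivity).
      unfold digit_symbol. replace (v - 1) with (a * 6 ^ d) by (unfold v; lia).
      now rewrite digit_mul_pow.
Qed.

Lemma cyclic_complexity : complexity 3 (6 ^ h) cyclic_protocol = (INR h * log2R 27)%R.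
Proof.
  rewrite (complexity_uniform _ _ _ 3).
  - simpl steps. rewrite length_schedule, mult_INR. unfold log2R.
    replace 27%R with (INR 3 ^ 3)%R by (simpl; ring).
    rewrite ln_pow by (simpl; lra). simpl INR. unfold Rdiv. ring.
  - simpl steps. rewrite length_schedule. apply S_l_cyclic.
Qed.

End CyclicProtocol.

Local Open Scope R_scope.

Theorem mainTheorem10 : forall h : nat, (1 <= h)%nat ->
  (exists P : protocol,
      solves_MEQ_AD 3 (6 ^ h) P /\ complexity 3 (6 ^ h) P = INR h * log2R 27)
  /\ C_AD_le 3 (6 ^ h) (INR h * log2R 27).
Proof.
  (* The construction works for h = 0 as well. *)
  intros h _. split.
  - exists (cyclic_protocol h). split; [apply cyclic_solves|apply cyclic_complexity].
  - rewrite <- (cyclic_complexity h). apply C_AD_le_solves, cyclic_solves.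
Qed.
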